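(* Let $k\ge0$, $m\ge1$ and define $Q(a,x):=\sum_{\varepsilon\in\{0,1\}^k}(-1)^{\#1(\varepsilon)}P(\varepsilon;b)$, where $\#1(\varepsilon)$ is the number of ones in $\varepsilon$. Then $Q(a,x)$ can be written as a quotient $f(a,x)/g(a,x)$ of polynomials such that $g$ has no factor of the form $M(\varepsilon';b;t)$ for any $\varepsilon'\in\{0,1\}^k$ and any $1\le t\le k$.
   Context: Let $a=(a_1,\dots,a_k)$ and $x=(x_1,\dots,x_m)$ be indeterminates and $b=(b_1,\dots,b_{k+m}):=(a_1,\dots,a_k,x_1,\dots,x_m)$. For a binary sequence $\varepsilon=(\varepsilon_1,\dots,\varepsilon_k)$ put $\delta^\varepsilon=(\delta^\varepsilon_1,\dots,\delta^\varepsilon_{k+m}):=(1,\varepsilon_1,\dots,\varepsilon_k,0,\dots,0)$ (length $k+m$: a $1$ prepended and $m-1$ zeros appended). Let $L(\delta^\varepsilon,j):=\max\{i\le j:\delta^\varepsilon_i=1\}$, $M(\varepsilon;b;j):=\sum_{\ell=L(\delta^\varepsilon,j)}^{j}b_\ell$, and $P(\varepsilon;b):=\prod_{j=1}^{k+m}\frac1{M(\varepsilon;b;j)}$. *)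

From HB Require Import structures.
From mathcomp Require Import all_boot all_order all_algebra.
From mathcomp Require Import fraction.
From mathcomp Require Import mpoly.
Set Implicit Arguments. Unset Strict Implicit. Unset Printing Implicit Defensive.
Import Order.TTheory GRing.Theory Num.Theory.
Local Open Scope ring_scope.

Notation tofracM := (@FracField.tofrac _).
Notation "x %:F" := (@FracField.tofrac _ x) : ring_scope.

(* Polynomial ring Q[b_1,...,b_{k+m}] = Q[a_1..a_k, x_1..x_m];
   b_l (1-based) is the variable 'X_(l-1). *)
Definition PolyR (k m : nat) := {mpoly rat[k + m]}.

Definition bvar (k m : nat) (l : nat) : {mpoly rat[k + m]} :=
  match @insub nat (fun i => i < k + m)%N _ l.-1 with
  | Some i => 'X_(i : 'I_(k + m))
  | None => 0
  end.

Definition delta (k : nat) (eps : {ffun 'I_k -> bool}) (i : nat) : bool :=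
  match i with
  | 0 => false
  | 1 => true
  | i'.+2 => match @insub nat (fun j => j < k)%N _ i' with
             | Some j => eps (j : 'I_k)
             | None => false
             end
  end.

Definition Lidx (d : nat -> bool) (j : nat) : nat :=
  (\max_(i < j.+1 | d i) (i : nat))%N.

Definition Mform (k m : nat) (eps : {ffun 'I_k -> bool}) (j : nat)
  : {mpoly rat[k + m]} :=
  \sum_(Lidx (delta eps) j <= l < j.+1) bvar k m l.

Definition Pfrac (k m : nat) (eps : {ffun 'I_k -> bool})
  : {fraction {mpoly rat[k + m]}} :=
  \prod_(1 <= j < (k + m).+1) ((Mform m eps j)%:F)^-1.

Definition Qfrac (k m : nat) : {fraction {mpoly rat[k + m]}} :=
  \sum_(eps : {ffun 'I_k -> bool})
     (-1) ^+ #|[set i | eps i]| * Pfrac m eps.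

Definition mdvd (n : nat) (p q : {mpoly rat[n]}) : Prop :=
  exists h : {mpoly rat[n]}, q = p * h.

From HB Require Import structures.
From mathcomp Require Import all_boot all_order all_algebra.
From mathcomp Require Import fraction.
From mathcomp Require Import mpoly.
From mathcomp Require Import ring zify.
Set Implicit Arguments. Unset Strict Implicit. Unset Printing Implicit Defensive.
Import GRing.Theory Num.Theory.
Local Open Scope ring_scope.

(* Write S(p, q) = b_p + ... + b_q and let T(c; p, q) be the sum, over all ways of
   shrinking the window [p, q] to the single point c by deleting one endpoint at a
   time, of the product of 1/S over the windows met on the way.  The partial-fraction
   identity 1/(A + B) * (1/A + 1/B) = 1/(AB) shows that
     prod_{t in [p, r]} 1/S(t, r) * prod_{t in [r+1, q]} 1/S(r+1, t)
       = T(r; p, q) + T(r+1; p, q).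
   Splitting the sum Q according to the last bit eps_k gives the recursion
   Q_{k+1} = Q_k - Q_k(first k+1 factors) * prod_{t > k+1} 1/S(k+2, t), and the
   identity above telescopes it to Q = (-1)^k T(k+1; 1, k+m).  Every window occurring
   in T(k+1; 1, k+m) contains b_(k+1) = x_1, so no denominator vanishes at a = 0,
   x = 1, whereas every M(eps; b; t) with t <= k does. *)

Definition bsum (V : nmodType) (b : nat -> V) (p q : nat) : V :=
  \sum_(p <= l < q.+1) b l.

Lemma bsum_split (V : nmodType) (b : nat -> V) p r q : (p <= r.+1 <= q.+1)%N ->
  bsum b p q = bsum b p r + bsum b r.+1 q.
Proof. by move=> /andP[h1 h2]; rewrite /bsum (big_cat_nat h1 h2). Qed.

Lemma Lidx_eq (d : nat -> bool) j c : (c <= j)%N -> d c ->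
  (forall i, (c < i <= j)%N -> ~~ d i) -> Lidx d j = c.
Proof.
move=> cj dc after_c; apply/eqP; rewrite eqn_leq; apply/andP; split.
  apply/bigmax_leqP => i di; rewrite leqNgt; apply/negP => ci.
  by have := after_c i; rewrite ci -ltnS ltn_ord di => /(_ isT).
exact: (leq_bigmax_cond (F := fun i : 'I_j.+1 => nat_of_ord i) (Ordinal (cj : c < j.+1)%N) dc).
Qed.

Lemma eq_Lidx (d d' : nat -> bool) j : (forall i, (i <= j)%N -> d i = d' i) ->
  Lidx d j = Lidx d' j.
Proof. by move=> eq_d; apply: eq_bigl => i; apply: eq_d (ltn_ord i). Qed.

Definition ffun_snoc k (e : {ffun 'I_k -> bool}) (b : bool) : {ffun 'I_k.+1 -> bool} :=
  [ffun i : 'I_k.+1 => if @insub nat (fun x => (x < k)%N) 'I_k (val i) is Some j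
                       then e j else b].

Lemma ffun_snoc_lt k (e : {ffun 'I_k -> bool}) b (i : 'I_k.+1) (j : 'I_k) :
  val i = val j -> ffun_snoc e b i = e j.
Proof.
move=> ij; rewrite ffunE; case: insubP => [j' _ vj'|]; last by rewrite ij ltn_ord.
by congr (e _); apply: val_inj; rewrite vj'.
Qed.

Lemma ffun_snoc_last k (e : {ffun 'I_k -> bool}) b (i : 'I_k.+1) :
  val i = k -> ffun_snoc e b i = b.
Proof.
move=> ik; rewrite ffunE; case: insubP => [j _ vj|] //.
by move: (ltn_ord j); rewrite vj ik ltnn.
Qed.

Lemma ffun_snoc_bij k :
  bijective (fun eb : {ffun 'I_k -> bool} * bool => ffun_snoc eb.1 eb.2).
Proof.
exists (fun e : {ffun 'I_k.+1 -> bool} => ([ffun j => e (widen_ord (leqnSn k) j)], e ord_max)).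
  move=> [e b] /=; rewrite (ffun_snoc_last _ _ (i := ord_max)) //; congr pair.
  by apply/ffunP => j; rewrite ffunE (ffun_snoc_lt _ _ (j := j)).
move=> e; apply/ffunP => i; rewrite ffunE; case: insubP => [j _ vj|].
  by rewrite ffunE; congr (e _); apply: val_inj.
move=> i_max; congr (e _); apply: val_inj => /=.
by apply/eqP; rewrite eqn_leq leqNgt i_max -ltnS ltn_ord.
Qed.

Lemma card_ffun_snoc k (e : {ffun 'I_k -> bool}) b :
  #|[set i | ffun_snoc e b i]| = (#|[set i | e i]| + b)%N.
Proof.
rewrite -!sum1_card big_mkcond big_ord_recr /= inE (ffun_snoc_last _ _ (i := ord_max)) //.
rewrite [in RHS]big_mkcond; congr (_ + _)%N.
by apply: eq_bigr => i _; rewrite !inE (ffun_snoc_lt _ _ (j := i)).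
Qed.

Lemma delta_gt k (e : {ffun 'I_k -> bool}) i : (k.+1 < i)%N -> delta e i = false.
Proof.
case: i => [|[|i]] //= hi; case: insubP => [j _ vj|] //.
by move: (ltn_ord j); rewrite vj; lia.
Qed.

Lemma delta_ffun_snoc k (e : {ffun 'I_k -> bool}) b i :
  delta (ffun_snoc e b) i = if i == k.+2 then b else delta e i.
Proof.
case: i => [|[|i]] //=; rewrite !eqSS.
case: insubP => [j1 _ v1|n1]; case: insubP => [j2 _ v2|n2] /=.
- rewrite (@ffun_snoc_lt _ e b _ j2); last by rewrite v1 v2.
  by case: eqP => // ik; move: (ltn_ord j2); rewrite v2 ik ltnn.
- have := ltn_ord j1; rewrite v1 ltnS leq_eqVlt (negbTE n2) orbF => ik.
  by rewrite ik ffun_snoc_last // v1; apply/eqP.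
- by move: (ltn_ord j2) n1; rewrite v2 -ltnS => /ltnW ->.
- by case: eqP => // ik; move: n1; rewrite ik ltnSn.
Qed.

Section Peeling.
Variables (K : fieldType) (b : nat -> K).

Definition prefix_prod p q := \prod_(p <= t < q.+1) (bsum b p t)^-1.
Definition suffix_prod p q := \prod_(p <= t < q.+1) (bsum b t q)^-1.

(* [peel d c p] is T(c; p, p + d). *)
Fixpoint peel d c p := match d with
  | 0 => if c == p then (b p)^-1 else 0
  | d'.+1 => (bsum b p (p + d'.+1)%N)^-1 * (peel d' c p.+1 + peel d' c p)
  end.

Lemma peel_out d c p : ((c < p) || (p + d < c))%N -> peel d c p = 0.
Proof.
elim: d p => [|d IH] p /= hc; last by rewrite !IH ?addr0 ?mulr0 //; lia.
by case: eqP => // cp; move: hc; rewrite cp addn0 ltnn.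
Qed.

Lemma prefix_prod_peel d p : prefix_prod p (p + d)%N = peel d p p.
Proof.
elim: d => [|d IH] /=; first by rewrite eqxx addn0 /prefix_prod big_nat1 /bsum big_nat1.
rewrite peel_out ?ltnSn // add0r -IH mulrC /prefix_prod addnS big_nat_recr //=; lia.
Qed.

Lemma suffix_prod_peel d p : suffix_prod p (p + d)%N = peel d (p + d)%N p.
Proof.
elim: d p => [|d IH] p /=; first by rewrite addn0 eqxx /suffix_prod big_nat1 /bsum big_nat1.
rewrite (peel_out (p := p)); last by apply/orP; right; lia.
by rewrite addr0 -addSnnS -IH /suffix_prod big_ltn //; lia.
Qed.

Lemma suffix_prefix_prod_peel_edge d p r : (r.+1 == p) || (r == (p + d)%N) ->
  suffix_prod p r * prefix_prod r.+1 (p + d)%N = peel d r p + peel d r.+1 p.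
Proof.
case/orP=> [/eqP <-|/eqP ->].
  by rewrite /suffix_prod big_geq // mul1r prefix_prod_peel (peel_out (c := r)) ?add0r ?ltnSn.
rewrite /prefix_prod big_geq // mulr1 suffix_prod_peel (peel_out (c := (p + d).+1)) ?addr0 //.
by rewrite ltnSn orbT.
Qed.


Definition Pterm k (e : {ffun 'I_k -> bool}) n :=
  \prod_(1 <= j < n.+1) (bsum b (Lidx (delta e) j) j)^-1.

Definition Qsum k n :=
  \sum_(e : {ffun 'I_k -> bool}) (-1) ^+ #|[set i | e i]| * Pterm e n.

Lemma Pterm_snoc_false k (e : {ffun 'I_k -> bool}) n :
  Pterm (ffun_snoc e false) n = Pterm e n.
Proof.
apply: eq_bigr => j _; congr (bsum b _ j)^-1; apply: eq_Lidx => i _.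
by rewrite delta_ffun_snoc; case: eqP => // ->; rewrite delta_gt.
Qed.

Lemma Pterm_snoc_true k (e : {ffun 'I_k -> bool}) n : (k < n)%N ->
  Pterm (ffun_snoc e true) n = Pterm e k.+1 * prefix_prod k.+2 n.
Proof.
move=> kn; rewrite /Pterm (big_cat_nat (n := k.+2)) //; congr (_ * _).
  apply: eq_big_nat => j hj; congr (bsum b _ j)^-1; apply: eq_Lidx => i hi.
  by rewrite delta_ffun_snoc ifN //; lia.
apply: eq_big_nat => j hj; congr (bsum b _ j)^-1; apply: Lidx_eq.
- lia.
- by rewrite delta_ffun_snoc eqxx.
- by move=> i hi; rewrite delta_ffun_snoc ifN ?delta_gt //; lia.
Qed.

Lemma QsumS k n : (k < n)%N -> Qsum k.+1 n = Qsum k n - Qsum k k.+1 * prefix_prod k.+2 n.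
Proof.
move=> kn; rewrite /Qsum (reindex _ (onW_bij _ (@ffun_snoc_bij k))) /=.
rewrite -(pair_bigA _ (fun e x =>
  (-1) ^+ #|[set i | ffun_snoc e x i]| * Pterm (ffun_snoc e x) n)) /=.
rewrite mulr_suml -sumrB; apply: eq_bigr => e _.
rewrite big_bool /= !card_ffun_snoc addn0 addn1 exprS Pterm_snoc_false Pterm_snoc_true //.
ring.
Qed.

Lemma Qsum0 n : Qsum 0 n = prefix_prod 1 n.
Proof.
rewrite /Qsum (big_pred1 [ffun i : 'I_0 => false]); last first.
  by move=> e /=; symmetry; apply/eqP/ffunP => -[].
rewrite (eq_card0 (A := [set i | _])) => [|[]//].
rewrite mul1r; apply: eq_big_nat => j hj; congr (bsum b _ j)^-1.
apply: Lidx_eq => //; first lia.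
by move=> [|[|i]] //= _; case: insubP => // [[]].
Qed.

Variable N : nat.
Hypothesis bsum_neq0 : forall p q, (1 <= p)%N -> (p <= q <= N)%N -> bsum b p q != 0.

Lemma suffix_prefix_prod_peel d p r : (1 <= p)%N -> (p + d <= N)%N ->
  (p <= r.+1 <= (p + d).+1)%N ->
  suffix_prod p r * prefix_prod r.+1 (p + d)%N = peel d r p + peel d r.+1 p.
Proof.
elim: d p r => [|d IH] p r hp hN hr.
  by apply: suffix_prefix_prod_peel_edge; lia.
have [|interior] := boolP ((r.+1 == p) || (r == (p + d.+1)%N)).
  exact: suffix_prefix_prod_peel_edge.
have IHl := IH p.+1 r ltac:(lia) ltac:(lia) ltac:(lia).
have IHr := IH p r hp ltac:(lia) ltac:(lia).
rewrite addSnnS in IHl; rewrite /= -mulrDr addrACA -IHl -IHr !addnS.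
set A := bsum b p r; set B := bsum b r.+1 (p + d).+1.
have hA : A != 0 by apply: bsum_neq0; lia.
have hB : B != 0 by apply: bsum_neq0; lia.
have hAB : bsum b p (p + d).+1 = A + B by apply: bsum_split; lia.
have hAB0 : A + B != 0 by rewrite -hAB; apply: bsum_neq0; lia.
rewrite hAB /suffix_prod big_ltn; last lia.
rewrite -/A /prefix_prod (big_nat_recr (p + d).+1) /=; last lia.
rewrite -/B; field.
by rewrite hA hB hAB0.
Qed.

Lemma Qsum_peel k n : (k < n <= N)%N -> Qsum k n = (-1) ^+ k * peel n.-1 k.+1 1.
Proof.
elim: k n => [|k IH] n hn.
  by rewrite Qsum0 expr0 mul1r -prefix_prod_peel add1n prednK //; lia.
rewrite QsumS; last lia.
rewrite !IH; try lia.
have shuffle : suffix_prod 1 k.+1 * prefix_prod k.+2 n =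
               peel n.-1 k.+1 1 + peel n.-1 k.+2 1.
  have := suffix_prefix_prod_peel (d := n.-1) (p := 1) (r := k.+1) isT.
  by rewrite add1n prednK; [apply; lia | lia].
have := suffix_prod_peel k 1; rewrite add1n => <-.
by rewrite -mulrA shuffle exprS; ring.
Qed.
End Peeling.

Section RegularFractions.
Variables (R : idomainType) (n : nat) (v : 'I_n -> R).

Definition regular_at (z : {fraction {mpoly R[n]}}) :=
  exists f g : {mpoly R[n]}, meval v g != 0 /\ z = f%:F / g%:F.

Lemma tofrac_neq0_meval (g : {mpoly R[n]}) : meval v g != 0 -> g%:F != 0.
Proof. by rewrite tofrac_eq0; apply: contraNneq => ->; rewrite meval0. Qed.

Lemma regular_tofrac f : regular_at f%:F.
Proof. by exists f, 1; rewrite meval1 oner_neq0 rmorph1 divr1. Qed.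

Lemma regular_inv g : meval v g != 0 -> regular_at (g%:F)^-1.
Proof. by exists 1, g; rewrite rmorph1 div1r. Qed.

Lemma regularD z1 z2 : regular_at z1 -> regular_at z2 -> regular_at (z1 + z2).
Proof.
move=> [f1 [g1 [g1v ->]]] [f2 [g2 [g2v ->]]].
exists (f1 * g2 + f2 * g1), (g1 * g2); rewrite mevalM mulf_neq0 //; split=> //.
by rewrite rmorphD !rmorphM /= addf_div ?tofrac_neq0_meval.
Qed.

Lemma regularM z1 z2 : regular_at z1 -> regular_at z2 -> regular_at (z1 * z2).
Proof.
move=> [f1 [g1 [g1v ->]]] [f2 [g2 [g2v ->]]].
exists (f1 * f2), (g1 * g2); rewrite mevalM mulf_neq0 //; split=> //.
by rewrite !rmorphM /= mulf_div.
Qed.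
End RegularFractions.

Lemma mdvd_meval n (v : 'I_n -> rat) (p g : {mpoly rat[n]}) :
  mdvd p g -> meval v p = 0 -> meval v g = 0.
Proof. by move=> [h ->] vp; rewrite mevalM vp mul0r. Qed.

Section Specialization.
Variables k m : nat.

Let bF (l : nat) : {fraction {mpoly rat[k + m]}} := (bvar k m l)%:F.

(* The point a = 0, x = 1, i.e. b_l = [k < l]. *)
Definition a0_x1 (i : 'I_(k + m)) : rat := (k < i.+1)%:R.

(* [bvar k m 0] is the junk value 'X_0, hence the bound 0 < l. *)
Lemma meval_bvar (w : nat -> rat) l : (0 < l <= k + m)%N ->
  meval (fun i : 'I_(k + m) => w i.+1) (bvar k m l) = w l.
Proof.
move=> hl; rewrite /bvar; case: insubP => [i _ vi|]; last lia.
by rewrite mevalXU vi prednK //; lia.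
Qed.

Lemma meval_a0_x1_bvar l : (l.-1 < k)%N -> meval a0_x1 (bvar k m l) = 0.
Proof.
move=> hl; rewrite /bvar; case: insubP => [i _ vi|_]; last by rewrite meval0.
by rewrite mevalXU /a0_x1 vi ltnNge hl.
Qed.

Lemma meval_bsum_bvar (w : nat -> rat) p q : (0 < p)%N -> (q <= k + m)%N ->
  meval (fun i : 'I_(k + m) => w i.+1) (bsum (bvar k m) p q) = bsum w p q.
Proof.
move=> hp hq; rewrite raddf_sum; apply: eq_big_nat => l hl.
by apply: meval_bvar; lia.
Qed.

Lemma bsum_bF p q : bsum bF p q = (bsum (bvar k m) p q)%:F.
Proof. by rewrite /bsum rmorph_sum. Qed.

Lemma bsum_bvar_neq0 p q : (1 <= p)%N -> (p <= q <= k + m)%N -> bsum bF p q != 0.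
Proof.
move=> hp hq; rewrite bsum_bF.
apply: (@tofrac_neq0_meval _ _ (fun _ => 1)).
rewrite (meval_bsum_bvar (fun _ => 1)) //; last lia.
by rewrite /bsum sumr_const_nat pnatr_eq0; lia.
Qed.

Lemma meval_a0_x1_bsum_neq0 p q : (1 <= p <= k.+1)%N -> (k < q <= k + m)%N ->
  meval a0_x1 (bsum (bvar k m) p q) != 0.
Proof.
move=> hp hq; rewrite (meval_bsum_bvar (fun l => (k < l)%:R)); try lia.
rewrite /bsum -natr_sum pnatr_eq0 -lt0n (big_cat_nat (n := k.+1)) /=; try lia.
by rewrite [X in (_ + X)%N]big_ltn ?ltnSn /=; lia.
Qed.

Lemma meval_a0_x1_Mform (eps : {ffun 'I_k -> bool}) t : (1 <= t <= k)%N ->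
  meval a0_x1 (Mform m eps t) = 0.
Proof.
move=> ht; rewrite /Mform raddf_sum big_nat_cond big1 // => l /andP[/andP[_ hl] _].
by apply: meval_a0_x1_bvar; lia.
Qed.

Lemma regular_peel d p : (1 <= p)%N -> (p + d <= k + m)%N ->
  regular_at a0_x1 (peel bF d k.+1 p).
Proof.
have regular0 : regular_at a0_x1 0 by have := regular_tofrac a0_x1 0; rewrite rmorph0.
elim: d p => [|d IH] p hp hpd.
  move: hpd => /=; case: eqP => [<-|_] // hk; apply: regular_inv.
  by rewrite (meval_bvar (fun l => (k < l)%:R)) ?ltnSn ?oner_neq0 //; lia.
have [out|inside] := boolP ((k.+1 < p) || (p + d.+1 < k.+1))%N.
  by rewrite peel_out.
apply: regularM => /=; last by apply: regularD; apply: IH; lia.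
by rewrite bsum_bF; apply/regular_inv/meval_a0_x1_bsum_neq0; lia.
Qed.

Lemma Qfrac_peel : (1 <= m)%N -> Qfrac k m = (-1) ^+ k * peel bF (k + m).-1 k.+1 1.
Proof.
move=> hm; have -> : Qfrac k m = Qsum bF k (k + m).
  by apply: eq_bigr => e _; congr (_ * _); apply: eq_bigr => j _; rewrite bsum_bF.
by rewrite (Qsum_peel bsum_bvar_neq0) //; lia.
Qed.
End Specialization.

Theorem mainTheorem8 (k m : nat) (hm : (1 <= m)%N) :
  exists f g : {mpoly rat[k + m]},
    g != 0 /\
    Qfrac k m = f%:F / g%:F /\
    (forall (eps' : {ffun 'I_k -> bool}) (t : nat),
        (1 <= t <= k)%N -> ~ mdvd (Mform m eps' t) g).
Proof.
have [f [g [g_a0_x1 Qfg]]] : regular_at (@a0_x1 k m) (Qfrac k m).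
  rewrite Qfrac_peel // -(rmorph_sign (@tofrac _)).
  apply: regularM; first exact: regular_tofrac.
  by apply: regular_peel; lia.
exists f, g; split; [|split] => //.
  by apply: contraNneq g_a0_x1 => ->; rewrite meval0.
move=> eps t ht /mdvd_meval/(_ (meval_a0_x1_Mform m eps ht)) g0.
by rewrite g0 eqxx in g_a0_x1.
Qed.
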